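(* Every local orthogonal map $F:U\subseteq\mathcal G(r,s)\to\mathcal G(r',s')$ maps null points to null points.
   Context: For $r\le s$, $\mathbb C^{r,s}$ denotes $\mathbb C^{r+s}$ with the indefinite Hermitian form $\langle z,w\rangle_{r,s}=\sum_{i=1}^r z_i\bar w_i-\sum_{i=r+1}^{r+s}z_i\bar w_i$. $\mathcal G(r,s)$ denotes the Grassmannian $G(r,r+s)$; for $p\in\mathcal G(r,s)$, $V_p$ is the corresponding $r$-dimensional subspace and $A_p$ an $r\times(r+s)$ matrix whose rows span $V_p$. With $I_{r,s}=\mathrm{diag}(I_r,-I_s)$, $p\perp q$ means $A_pI_{r,s}A_q^H=0$, and $p$ is null if $A_pI_{r,s}A_p^H=0$. A holomorphic map $F:U\to\mathcal G(r',s')$, with $U\subseteq\mathcal G(r,s)$ a connected open set containing a null point, is a local orthogonal map if $F(p)\perp F(q)$ for all $p,q\in U$ with $p\perp q$. *)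

From HB Require Import structures.
From mathcomp Require Import all_boot all_order all_algebra.
From mathcomp Require Import all_classical all_reals all_analysis.
From mathcomp Require Import complex.
Set Implicit Arguments.
Unset Strict Implicit.
Unset Printing Implicit Defensive.
Import Order.TTheory GRing.Theory Num.Theory.
Import numFieldNormedType.Exports.
Local Open Scope ring_scope.
Local Open Scope classical_set_scope.

Definition MX (R : realType) (m n : nat) : normedModType R[i] :=
  ('M[R[i]]_(m, n) : normedModType R[i]).

Definition adjmx (R : realType) m n (A : 'M[R[i]]_(m, n)) : 'M[R[i]]_(n, m) :=
  (map_mx (fun z : R[i] => z^*) A)^T.

Definition Irs (R : realType) (r s : nat) : 'M[R[i]]_(r + s) :=
  \matrix_(i, j) (if i == j then (if (i < r)%N then 1 else -1) else 0).

(* Points of the Grassmannian G(r,s) = G(r, r+s): r-dimensional subspaces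
   V_p of C^{r+s}, each represented canonically by the square matrix
   <<V>>%MS (mxalgebra's canonical representative of a row space). *)
Definition Grass (R : realType) (r s : nat) :=
  {V : 'M[R[i]]_(r + s) | (\rank V == r) && (genmx V == V)}.

Definition Vsp (R : realType) r s (p : Grass R r s) : 'M[R[i]]_(r + s) := val p.

(* A_p: an (r x (r+s)) matrix (here of dimension \rank V_p = r) whose rows
   span V_p. *)
Definition Amx (R : realType) r s (p : Grass R r s) := row_base (Vsp p).

Definition gperp (R : realType) r s (p q : Grass R r s) : Prop :=
  Amx p *m Irs R r s *m adjmx (Amx q) = 0.

Definition gnull (R : realType) r s (p : Grass R r s) : Prop := gperp p p.

Definition stiefel_preim (R : realType) r s (U : set (Grass R r s))
  : set 'M[R[i]]_(r, r + s) :=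
  [set X | exists2 p, U p & (X == Vsp p)%MS].

(* Topology of the Grassmannian: quotient topology of the (open) set of
   full-rank r x (r+s) matrices. *)
Definition gopen (R : realType) r s (U : set (Grass R r s)) : Prop :=
  @open (MX R r (r + s)) (stiefel_preim U).

Definition gconnected (R : realType) r s (U : set (Grass R r s)) : Prop :=
  forall V1 V2 : set (Grass R r s), gopen V1 -> gopen V2 ->
    U `<=` V1 `|` V2 -> U `&` V1 !=set0 -> U `&` V2 !=set0 ->
    U `&` V1 `&` V2 !=set0.

(* Holomorphy of F : U -> G(r',s'): locally, F lifts to a holomorphic
   (complex-differentiable) map between the matrix spaces, i.e. near every
   X in the preimage of U there is a holomorphic Phi with
   V_{F(p)} = rowspace (Phi X) whenever rowspace X = V_p. *)
Definition gholomorphic (R : realType) r s r' s' (U : set (Grass R r s))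
  (F : Grass R r s -> Grass R r' s') : Prop :=
  forall X : 'M[R[i]]_(r, r + s), stiefel_preim U X ->
  exists W : set (MX R r (r + s)),
    [/\ open W, W X,
        W `<=` stiefel_preim U &
        exists Phi : MX R r (r + s) -> MX R r' (r' + s'),
          forall Y : MX R r (r + s), W Y ->
            differentiable Phi Y /\
            (forall p, U p -> (Y == Vsp p)%MS -> (Phi Y == Vsp (F p))%MS)].

Definition local_orthogonal_map (R : realType) r s r' s'
  (U : set (Grass R r s)) (F : Grass R r s -> Grass R r' s') : Prop :=
  [/\ gopen U, gconnected U, (exists2 p, U p & gnull p),
      gholomorphic U F &
      forall p q, U p -> U q -> gperp p q -> gperp (F p) (F q)].

From HB Require Import structures.
From mathcomp Require Import all_boot all_order all_algebra.
From mathcomp Require Import all_classical all_reals all_analysis.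
From mathcomp Require Import complex.
Import Order.TTheory GRing.Theory Num.Theory.
Local Open Scope classical_set_scope.

Theorem proposition2p4 (R : realType) (r s r' s' : nat)
  (hrs : (r <= s)%N) (hrs' : (r' <= s')%N)
  (U : set (Grass R r s)) (F : Grass R r s -> Grass R r' s') :
  local_orthogonal_map U F ->
  forall p, U p -> gnull p -> gnull (F p).
Proof.
by move=> [_ _ _ _ F_perp] p Up p_null; apply: F_perp.
Qed.
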